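(* Let $L,d\in \mathbb{N}$, $q\in [1,\infty]$, $c\in (0,\infty)$, and $N_1,\dots , N_{L-1}\in \mathbb{N}$. Then for every $m\in\mathbb{N}$, \[ \mathrm{err}_m^{MC}\left(\mathcal{H}_{(d,N_1,\dots , N_{L-1},1),c}^q,L^\infty([0,1]^d)\right) \le \begin{cases} 2\sqrt{d}\cdot c^L\cdot m^{-\frac1d} & \text{if } q\le 2, \\ 2\sqrt{d}\cdot c^L\cdot (\sqrt{d}\cdot N_1 \cdots N_{L-1})^{1-\frac{2}{q}}\cdot m^{-\frac1d} & \text{if } q\geq 2 .\end{cases} \]
   Context: ReLU: $\varrho(x)=\max\{0,x\}$, applied componentwise. For an architecture $(N_0,\dots,N_L)$ and coefficients $\Phi=((W^i,b^i))_{i=1}^L$ with $W^i\in\mathbb{R}^{N_i\times N_{i-1}}$, $b^i\in\mathbb{R}^{N_i}$, the realization is $R(\Phi)(x)=x^L$ with $x^0=x$, $x^i=\varrho(W^ix^{i-1}+b^i)$ for $1\le i\le L-1$, $x^L=W^Lx^{L-1}+b^L$. $\|\cdot\|_{\ell^q}$ of a matrix/vector is the entrywise $\ell^q$ norm, $\|\Phi\|_{\ell^q}=\max_i\max\{\|W^i\|_{\ell^q},\|b^i\|_{\ell^q}\}$, and $\mathcal{H}^q_{(N_0,\dots,N_L),c}=\{R(\Phi):\|\Phi\|_{\ell^q}\le c\}$, viewed as functions on $[0,1]^{N_0}$. Here $N_0=d$, $N_L=1$; $2/q=0$ for $q=\infty$. Algorithms: for a Banach space $Y$ and $U\subset C([0,1]^d)\cap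 Y$, $A:U\to Y$ is an adaptive deterministic method using $m$ point samples if there are $f_1\in[0,1]^d$, maps $f_i:([0,1]^d)^{i-1}\times\mathbb{R}^{i-1}\to[0,1]^d$ and $Q:([0,1]^d)^m\times\mathbb{R}^m\to Y$ such that, with $x_1=f_1$, $x_i=f_i(x_1,\dots,x_{i-1},u(x_1),\dots,u(x_{i-1}))$, $A(u)=Q(x_1,\dots,x_m,u(x_1),\dots,u(x_m))$ for all $u\in U$; these form $\mathrm{Alg}_m(U,Y)$. An adaptive random method using $m$ samples on average is $(\mathbf{A},\mathbf{m})$, $\mathbf{A}=(A_\omega)_{\omega\in\Omega}$ on a probability space, $\mathbf{m}:\Omega\to\mathbb{N}$ measurable with $\mathbb{E}[\mathbf{m}]\le m$, $\omega\mapsto A_\omega(u)$ Borel measurable for each $u$, and $A_\omega\in\mathrm{Alg}_{\mathbf{m}(\omega)}(U,Y)$; these form $\mathrm{Alg}^{MC}_m(U,Y)$. Then $\mathrm{err}^{MC}_m(U,Y)=\inf_{(\mathbf{A},\mathbf{m})\in\mathrm{Alg}^{MC}_m(U,Y)}\sup_{u\in U}\mathbb{E}[\|u-A_\omega(u)\|_Y]$. *)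

From HB Require Import structures.
From mathcomp Require Import all_boot all_order all_algebra.
From mathcomp Require Import all_classical all_reals all_analysis.
Unset Printing Implicit Defensive.
Import Order.TTheory GRing.Theory Num.Theory.
Import numFieldNormedType.Exports.
Local Open Scope classical_set_scope.
Local Open Scope ring_scope.

Section NNDefs.
Context {R : realType}.

Definition relu (x : R) : R := Num.max 0 x.

Definition lq_norm (q : \bar R) (I : finType) (a : I -> R) : R :=
  match q with
  | EFin r => powR (\sum_i powR `|a i| r) r^-1
  | _ => \big[Num.max/0]_i `|a i|
  end.
Arguments lq_norm q {I}.

Definition mx_lq (q : \bar R) (m n : nat) (A : 'M[R]_(m, n)) : R :=
  lq_norm q (fun ij : 'I_m * 'I_n => A ij.1 ij.2).
Arguments mx_lq q {m n}.

(** architecture (N_0, N_1, ..., N_{L-1}, N_L) with N_0 = d; the output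
    layer N_L = 1 is handled separately below *)
Definition arch (d : nat) (Ns : nat -> nat) (i : nat) : nat :=
  if i is 0 then d else Ns i.

(** network coefficients Phi = ((W^i,b^i))_{i=1..L}; here layer i (paper)
    is stored at index i-1 for i <= L-1, and the last layer (W^L,b^L) with
    W^L in R^{1 x N_{L-1}}, b^L in R^1 separately.  Entries of nn_W/nn_b with
    index >= L-1 are unused. *)
Record nnet (d : nat) (Ns : nat -> nat) (L : nat) := NNet {
  nn_W : forall i : nat, 'M[R]_(arch d Ns i.+1, arch d Ns i);
  nn_b : forall i : nat, 'cV[R]_(arch d Ns i.+1);
  nn_WL : 'M[R]_(1, arch d Ns L.-1);
  nn_bL : 'cV[R]_1 }.
Arguments nn_W {d Ns L}. Arguments nn_b {d Ns L}.
Arguments nn_WL {d Ns L}. Arguments nn_bL {d Ns L}.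

Fixpoint nn_hidden d Ns L (Phi : nnet d Ns L) (x : 'cV[R]_d) (k : nat)
  : 'cV[R]_(arch d Ns k) :=
  match k return 'cV[R]_(arch d Ns k) with
  | 0 => x
  | k'.+1 => map_mx relu (nn_W Phi k' *m nn_hidden d Ns L Phi x k' + nn_b Phi k')
  end.

Definition realize d Ns L (Phi : nnet d Ns L) (x : 'cV[R]_d) : R :=
  (nn_WL Phi *m nn_hidden d Ns L Phi x L.-1 + nn_bL Phi) ord0 ord0.

Definition nn_norm_le d Ns L (q : \bar R) (c : R) (Phi : nnet d Ns L) : Prop :=
  (forall i : nat, (i < L.-1)%N ->
      mx_lq q (nn_W Phi i) <= c /\ mx_lq q (nn_b Phi i) <= c) /\
  mx_lq q (nn_WL Phi) <= c /\ mx_lq q (nn_bL Phi) <= c.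

Definition Hclass (q : \bar R) (d : nat) (Ns : nat -> nat) (L : nat) (c : R)
  : set ('cV[R]_d -> R) :=
  [set f | exists Phi : nnet d Ns L, nn_norm_le d Ns L q c Phi /\ f = realize d Ns L Phi].

Definition cube (d : nat) : set 'cV[R]_d := [set x | forall i, 0 <= x i 0 <= 1].

(** Lebesgue null sets of R^d (Lebesgue outer measure zero, via countable
    covers by closed boxes) *)
Definition lnull (d : nat) (N : set 'cV[R]_d) : Prop :=
  forall eps : R, 0 < eps ->
  exists a b : nat -> 'cV[R]_d,
    (forall k i, a k i 0 <= b k i 0) /\
    N `<=` \bigcup_k [set x | forall i, a k i 0 <= x i 0 <= b k i 0] /\
    (forall n, \sum_(k < n) \prod_i (b k i 0 - a k i 0) <= eps).

(** the L^infty([0,1]^d) (semi)norm: essential supremum on the cube *)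
Definition Linf_norm (d : nat) (g : 'cV[R]_d -> R) : \bar R :=
  ereal_inf [set M%:E | M in [set M : R | lnull d (cube d `&` [set x | M < `|g x|])]].

Definition borel (d : nat) (A : set 'cV[R]_d) : Prop :=
  smallest (sigma_algebra setT) [set O : set 'cV[R]_d | open O] A.

(** representatives of elements of Y = L^infty([0,1]^d): Borel measurable on
    the cube and essentially bounded *)
Definition Linf (d : nat) : set ('cV[R]_d -> R) :=
  [set g | (forall a : R, borel d (cube d `&` [set x | a < g x])) /\
           (Linf_norm d g < +oo)%E].

Definition Linf_open (d : nat) (O : set ('cV[R]_d -> R)) : Prop :=
  forall g, Linf d g -> O g -> exists r : R, 0 < r /\
    forall h, Linf d h -> (Linf_norm d (g \- h)%R < r%:E)%E -> O h.

Fixpoint samples (d : nat) (f : seq ('cV[R]_d * R) -> 'cV[R]_d)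
  (u : 'cV[R]_d -> R) (k : nat) : seq ('cV[R]_d * R) :=
  match k with
  | 0 => [::]
  | k'.+1 => let s := samples d f u k' in rcons s (f s, u (f s))
  end.

Definition det_alg (d : nat) (U : set ('cV[R]_d -> R)) (m : nat)
  (A : ('cV[R]_d -> R) -> ('cV[R]_d -> R)) : Prop :=
  exists (f : seq ('cV[R]_d * R) -> 'cV[R]_d)
         (Q : seq ('cV[R]_d * R) -> ('cV[R]_d -> R)),
    (forall s, cube d (f s)) /\ (forall s, Linf d (Q s)) /\
    (forall u, U u -> A u = Q (samples d f u m)).

Definition mc_alg (d : nat) (U : set ('cV[R]_d -> R)) (m : nat)
  (d0 : measure_display) (Omega : measurableType d0) (P : probability Omega R)
  (A : Omega -> ('cV[R]_d -> R) -> ('cV[R]_d -> R)) (mm : Omega -> nat) : Prop :=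
  (forall n : nat, measurable [set w | mm w = n]) /\
  (\int[P]_w ((mm w)%:R)%:E <= (m%:R)%:E)%E /\
  (forall u, U u -> forall O, Linf_open d O -> measurable [set w | O (A w u)]) /\
  (forall w, det_alg d U (mm w) (A w)).

Definition errMC (d : nat) (U : set ('cV[R]_d -> R)) (m : nat) : \bar R :=
  ereal_inf [set e | exists (d0 : measure_display) (Omega : measurableType d0)
      (P : probability Omega R) (A : Omega -> ('cV[R]_d -> R) -> ('cV[R]_d -> R))
      (mm : Omega -> nat),
      mc_alg d U m d0 Omega P A mm /\
      e = ereal_sup [set (\int[P]_w Linf_norm d (u \- A w u)%R)%E | u in U]].

Definition qexp (q : \bar R) : R :=
  match q with EFin r => 1 - 2 / r | _ => 1 end.

End NNDefs.

(* A deterministic algorithm suffices.  Choose N with N^d <= m < (N+1)^d,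
   sample u at the N^d midpoints of a uniform grid of [0,1]^d, and approximate u(x) by
   the largest sampled value at a grid point within sup-distance 1/N of x.  A ReLU
   network is Lipschitz for the Euclidean norm, with constant K the product of the
   Frobenius norms of its weight matrices, and every x has such a grid point, so the
   error is at most K sqrt(d) / N <= 2 K sqrt(d) m^(-1/d).  The Frobenius norm of a
   matrix with k entries is at most its l^q norm when q <= 2, and at most k^(1/2 - 1/q)
   times it when q >= 2 (Jensen for t |-> t^(q/2)); multiplying over the layers gives
   K <= c^L, resp. K <= c^L (sqrt(d) N_1 ... N_(L-1))^(1 - 2/q). *)

From HB Require Import structures.
From mathcomp Require Import all_boot all_order all_algebra.
From mathcomp Require Import all_classical all_reals all_analysis.
From mathcomp Require Import zify ring lra.
Import Order.TTheory GRing.Theory Num.Theory.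
Import numFieldNormedType.Exports.
Local Open Scope classical_set_scope.
Local Open Scope ring_scope.

Section PowR.
Context {R : realType}.

Lemma jensen_powR {p : R} {J : Type} (s : seq J) (b : J -> R) :
  1 <= p -> (forall j, 0 <= b j) -> (0 < size s)%N ->
  ((\sum_(j <- s) b j) / (size s)%:R) `^ p <= (\sum_(j <- s) b j `^ p) / (size s)%:R.
Proof.
move=> p1 b0; elim: s => [//|j s IH] _.
case: s IH => [|j' s'] IH; first by rewrite !big_seq1 !divr1.
have k0 : 0 < (size (j' :: s'))%:R :> R by rewrite ltr0n.
move: (j' :: s') k0 (IH isT) => s k0 {}IH.
rewrite /= -addn1 natrD !big_cons.
move: (size s)%:R k0 IH => k k0 IH.
have k10 : 0 < k + 1 by rewrite addr_gt0.
have t0 : 0 <= k / (k + 1) by rewrite divr_ge0 ?(ltW k0) ?(ltW k10).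
have t1 : k / (k + 1) <= 1 by rewrite ler_pdivrMr // mul1r lerDl.
pose t := Itv01 t0 t1.
set X := (\sum_(j <- s) b j) / k.
have X0 : 0 <= X by rewrite divr_ge0 ?(ltW k0) ?sumr_ge0.
have -> : (b j + \sum_(j <- s) b j) / (k + 1) = k / (k + 1) * X + (1 - k / (k + 1)) * b j.
  by rewrite /X; field; rewrite ?gt_eqF.
have := @convex_powR R p p1 t X (b j).
rewrite !inE /= !in_itv /= !andbT X0 b0 => /(_ isT isT).
rewrite convRE [X in X `^ _ <= _ -> _]convRE /= => /le_trans; apply.
have -> : (b j `^ p + \sum_(j <- s) b j `^ p) / (k + 1)
        = k / (k + 1) * ((\sum_(j <- s) b j `^ p) / k) + (1 - k / (k + 1)) * b j `^ p.
  by field; rewrite ?gt_eqF.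
by rewrite lerD2r ler_wpM2l.
Qed.

Lemma ler_powR2r (r : R) : 0 < r -> {in Num.nneg &, {mono @powR R ^~ r : x y / x <= y}}.
Proof.
move=> r0 x y x0 y0; apply/idP/idP; last exact: (ge0_ler_powR (ltW r0) x0 y0).
by apply: contraTT; rewrite -!ltNge; exact: (gt0_ltr_powR r0 y0 x0).
Qed.

Lemma prodr_powR n (F : 'I_n -> R) e : (forall i, 0 <= F i) ->
  \prod_(i < n) F i `^ e = (\prod_(i < n) F i) `^ e.
Proof.
elim: n F => [|n IH] F F0; first by rewrite !big_ord0 powR1.
by rewrite !big_ord_recr /= IH // powRM // prodr_ge0.
Qed.

End PowR.

Section LqNorm.
Context {R : realType}.
Implicit Types (q : \bar R) (I : finType).

Lemma lq_norm_ge0 q {I} (a : I -> R) : 0 <= lq_norm q I a.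
Proof.
case: q => [r||] /=; first exact: powR_ge0.
all: by apply: (big_ind (fun x => 0 <= x)) => // x y; rewrite le_max => ->.
Qed.

Lemma normr_le_lq_norm q {I} (a : I -> R) i : (0 < q)%E -> `|a i| <= lq_norm q I a.
Proof.
case: q => [r||] //= r0; last exact: le_bigmax.
rewrite lte_fin in r0.
have -> : `|a i| = (`|a i| `^ r) `^ r^-1 by rewrite -powRrM mulfV ?gt_eqF ?powRr1.
have S0 j : 0 <= `|a j| `^ r by exact: powR_ge0.
apply: ge0_ler_powR; rewrite ?nnegrE ?invr_ge0 ?(ltW r0) ?sumr_ge0 //.
by rewrite (bigD1 i) //= lerDl sumr_ge0.
Qed.

Lemma powR_lq_norm (r : R) {I} (a : I -> R) :
  0 < r -> lq_norm r%:E I a `^ r = \sum_i `|a i| `^ r.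
Proof.
move=> r0; rewrite /= -powRrM mulVf ?gt_eqF ?powRr1 //.
by apply: sumr_ge0 => i _; exact: powR_ge0.
Qed.

(* [a_i^2 = |a_i|^r |a_i|^(2-r) <= |a_i|^r ||a||_r^(2-r)], then sum over [i]. *)
Lemma sum_sqr_le_lq_norm_sqr q {I} (a : I -> R) :
  (1 <= q)%E -> (q <= 2%:E)%E -> \sum_i a i ^+ 2 <= lq_norm q I a ^+ 2.
Proof.
case: q => [r||] // r1 r2; rewrite ?lee_fin in r1 r2.
have r0 : 0 < r by exact: lt_le_trans r1.
set T := lq_norm r%:E I a.
have T0 : 0 <= T by exact: lq_norm_ge0.
have pow2 (x : R) : 0 <= x -> x ^+ 2 = x `^ r * x `^ (2 - r).
  by move=> x0; rewrite -powRD ?subrKC ?pnatr_eq0 ?powR_mulrn.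
have le_term i : a i ^+ 2 <= `|a i| `^ r * T `^ (2 - r).
  rewrite -real_normK ?num_real // pow2 // ler_wpM2l ?powR_ge0 //.
  by rewrite ge0_ler_powR ?nnegrE ?subr_ge0 // normr_le_lq_norm ?lte_fin.
apply: le_trans (ler_sum _ (fun i _ => le_term i)) _.
have TS : \sum_i `|a i| `^ r = T `^ r by rewrite /T powR_lq_norm.
by rewrite -mulr_suml TS -pow2.
Qed.

(* Jensen for [t |-> t^(r/2)], applied to the [a_i^2]. *)
Lemma sum_sqr_le_card_lq_norm_sqr q {I} (a : I -> R) :
  (2%:E <= q)%E -> \sum_i a i ^+ 2 <= #|I|%:R `^ qexp q * lq_norm q I a ^+ 2.
Proof.
have sqr_le (x y : R) : 0 <= y -> `|x| <= y -> x ^+ 2 <= y ^+ 2.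
  by move=> y0 xy; rewrite -real_normK ?num_real // ler_sqr ?nnegrE.
case: q => [r||] // r2; last first.
  rewrite [qexp _]/= powRr1 ?ler0n // mulr_natl -sumr_const ler_sum // => i _.
  by rewrite sqr_le ?lq_norm_ge0 ?normr_le_lq_norm.
rewrite lee_fin in r2; have r0 : 0 < r by exact: lt_le_trans r2.
set T := lq_norm r%:E I a.
have T0 : 0 <= T by exact: lq_norm_ge0.
have [I0|I_gt0] := posnP #|I|.
  rewrite big1 ?mulr_ge0 ?powR_ge0 ?sqr_ge0 // => i _.
  by have := card0_eq I0 i; rewrite !inE.
set n : R := #|I|%:R; have n0 : 0 < n by rewrite ltr0n.
set p := r / 2; have p0 : 0 < p by rewrite divr_gt0.
have p1 : 1 <= p by rewrite ler_pdivlMr // mul1r.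
set mu := (\sum_i a i ^+ 2) / n.
have mu0 : 0 <= mu by rewrite divr_ge0 ?(ltW n0) ?sumr_ge0 // => i _; exact: sqr_ge0.
have sqr_powR (x : R) : (x ^+ 2) `^ p = `|x| `^ r.
  by rewrite -real_normK ?num_real // -powR_mulrn // -powRrM /p mulrC divfK ?pnatr_eq0.
have jensen : mu `^ p <= T `^ r / n.
  have := jensen_powR (index_enum I) (fun i => a i ^+ 2) p1 (fun i => sqr_ge0 _).
  have -> : size (index_enum I) = #|I| by rewrite cardT enumT.
  rewrite -/n => /(_ I_gt0) /le_trans; apply.
  by rewrite /T powR_lq_norm //; under eq_bigr do rewrite sqr_powR.
have -> : \sum_i a i ^+ 2 = n * mu by rewrite /mu mulrC divfK ?gt_eqF.
rewrite /= powRB ?(gt_eqF n0) ?implybT // powRr1 ?(ltW n0) // -mulrA ler_pM2l //.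
rewrite -(ler_powR2r p p0) ?nnegrE ?mu0 ?mulr_ge0 ?invr_ge0 ?powR_ge0 ?sqr_ge0 //.
rewrite powRM ?invr_ge0 ?powR_ge0 ?sqr_ge0 // sqr_powR ger0_norm // mulrC -powRN -powRrM mulNr.
have -> : 2 / r * p = 1 by rewrite /p; field; rewrite gt_eqF.
by rewrite powR_inv1 ?(ltW n0).
Qed.

End LqNorm.

Section Lipschitz.
Context {R : realType}.

Definition sqnorm {n} (v : 'cV[R]_n) : R := \sum_i v i ord0 ^+ 2.
Definition sqfrob {m n} (W : 'M[R]_(m, n)) : R := \sum_(ij : 'I_m * 'I_n) W ij.1 ij.2 ^+ 2.

Lemma sqnorm_ge0 {n} (v : 'cV[R]_n) : 0 <= sqnorm v.
Proof. by apply: sumr_ge0 => i _; exact: sqr_ge0. Qed.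

Lemma sqfrob_ge0 {m n} (W : 'M[R]_(m, n)) : 0 <= sqfrob W.
Proof. by apply: sumr_ge0 => i _; exact: sqr_ge0. Qed.

(* Discriminant argument: [sum_i (a_i - t b_i)^2 >= 0] at [t = (a.b) / (b.b)]. *)
Lemma sqr_sum_mul_le {I : finType} (a b : I -> R) :
  (\sum_i a i * b i) ^+ 2 <= (\sum_i a i ^+ 2) * (\sum_i b i ^+ 2).
Proof.
set Sa := \sum_i a i ^+ 2; set Sb := \sum_i b i ^+ 2; set Sab := \sum_i a i * b i.
have Sa0 : 0 <= Sa by apply: sumr_ge0 => i _; exact: sqr_ge0.
have Sb0 : 0 <= Sb by apply: sumr_ge0 => i _; exact: sqr_ge0.
have [Sb_eq0|Sb_neq0] := eqVneq Sb 0.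
  have b0 i : b i = 0.
    by apply/eqP; rewrite -sqrf_eq0; apply/eqP/(psumr_eq0P _ Sb_eq0) => // j _; exact: sqr_ge0.
  by rewrite /Sab big1 ?expr0n ?mulr_ge0 // => i _; rewrite b0 mulr0.
have Sb_gt0 : 0 < Sb by rewrite lt_def Sb_neq0.
set t := Sab / Sb.
have expand : \sum_i (a i - t * b i) ^+ 2 = Sa - 2 * t * Sab + t ^+ 2 * Sb.
  rewrite /Sa /Sab /Sb !mulr_sumr -sumrB -big_split /=.
  by apply: eq_bigr => i _; ring.
have : 0 <= Sa - 2 * t * Sab + t ^+ 2 * Sb.
  by rewrite -expand sumr_ge0 // => i _; exact: sqr_ge0.
have -> : Sa - 2 * t * Sab + t ^+ 2 * Sb = (Sa * Sb - Sab ^+ 2) / Sb.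
  by rewrite /t; field; rewrite gt_eqF.
by rewrite pmulr_lge0 ?invr_gt0 // subr_ge0.
Qed.

Lemma sqnorm_mulmx_le {m n} (W : 'M[R]_(m, n)) (v : 'cV[R]_n) :
  sqnorm (W *m v) <= sqfrob W * sqnorm v.
Proof.
rewrite /sqnorm /sqfrob -(pair_bigA _ (fun i j => W i j ^+ 2)) /= mulr_suml.
apply: ler_sum => i _; rewrite mxE.
by have := sqr_sum_mul_le (W i) (v ^~ ord0).
Qed.

Lemma sqr_relu_sub_le (x y : R) : (relu x - relu y) ^+ 2 <= (x - y) ^+ 2.
Proof.
rewrite /relu /Num.Def.maxr.
case: (ltrP 0 x) => hx; case: (ltrP 0 y) => hy //=.
- by rewrite subr0 ler_pXn2r ?nnegrE //; lra.
- by rewrite -[(0 - y) ^+ 2]sqrrN -[(x - y) ^+ 2]sqrrN ler_pXn2r ?nnegrE //; lra.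
- by rewrite subr0 expr0n /= sqr_ge0.
Qed.

Lemma sqnorm_layer_sub_le {m n} (W : 'M[R]_(m, n)) (b : 'cV[R]_m) (x y : 'cV[R]_n) :
  sqnorm (map_mx relu (W *m x + b) - map_mx relu (W *m y + b)) <= sqfrob W * sqnorm (x - y).
Proof.
apply: le_trans (sqnorm_mulmx_le W (x - y)).
apply: ler_sum => i _; rewrite mulmxBr !mxE.
by apply: le_trans (sqr_relu_sub_le _ _) _; rewrite opprD addrACA subrr addr0.
Qed.

Lemma sqnorm_hidden_sub_le {d Ns L} (Phi : nnet d Ns L) (x y : 'cV[R]_d) k :
  sqnorm (nn_hidden d Ns L Phi x k - nn_hidden d Ns L Phi y k)
  <= (\prod_(i < k) sqfrob (nn_W d Ns L Phi i)) * sqnorm (x - y).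
Proof.
elim: k => [|k IH]; first by rewrite big_ord0 mul1r.
rewrite /= big_ord_recr /=; apply: le_trans (sqnorm_layer_sub_le _ _ _ _) _.
by rewrite mulrC [X in _ <= X]mulrAC ler_wpM2r ?sqfrob_ge0.
Qed.

Definition nn_sqlip {d Ns L} (Phi : nnet d Ns L) : R :=
  sqfrob (nn_WL d Ns L Phi) * \prod_(i < L.-1) sqfrob (nn_W d Ns L Phi i).

Lemma sqr_realize_sub_le {d Ns L} (Phi : nnet d Ns L) (x y : 'cV[R]_d) :
  (realize d Ns L Phi x - realize d Ns L Phi y) ^+ 2 <= nn_sqlip Phi * sqnorm (x - y).
Proof.
rewrite /realize /nn_sqlip -mulrA.
set hx := nn_hidden d Ns L Phi x L.-1; set hy := nn_hidden d Ns L Phi y L.-1.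
set WL := nn_WL d Ns L Phi; set bL := nn_bL d Ns L Phi.
have -> : (WL *m hx + bL) ord0 ord0 - (WL *m hy + bL) ord0 ord0 = (WL *m (hx - hy)) ord0 ord0.
  by rewrite mulmxBr !mxE opprD addrACA subrr addr0.
have -> : (WL *m (hx - hy)) ord0 ord0 ^+ 2 = sqnorm (WL *m (hx - hy)) by rewrite /sqnorm big_ord1.
apply: le_trans (sqnorm_mulmx_le _ _) _.
by rewrite ler_wpM2l ?sqfrob_ge0 ?sqnorm_hidden_sub_le.
Qed.

Lemma nn_sqlip_ge0 {d Ns L} (Phi : nnet d Ns L) : 0 <= nn_sqlip Phi.
Proof. by rewrite mulr_ge0 ?sqfrob_ge0 // prodr_ge0 // => i _; exact: sqfrob_ge0. Qed.

Lemma normr_realize_sub_le {d Ns L} (Phi : nnet d Ns L) (x y : 'cV[R]_d) (K rho : R) :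
  0 <= K -> 0 <= rho -> nn_sqlip Phi <= K ^+ 2 ->
  (forall i, `|x i ord0 - y i ord0| <= rho) ->
  `|realize d Ns L Phi x - realize d Ns L Phi y| <= K * Num.sqrt d%:R * rho.
Proof.
move=> K0 rho0 HK Hxy.
rewrite -ler_sqr ?nnegrE ?mulr_ge0 ?sqrtr_ge0 // real_normK ?num_real //.
apply: le_trans (sqr_realize_sub_le Phi x y) _.
rewrite !exprMn sqr_sqrtr ?ler0n // -mulrA ler_pM ?nn_sqlip_ge0 ?sqnorm_ge0 //.
apply: le_trans (_ : \sum_(i < d) rho ^+ 2 <= _); last by rewrite sumr_const card_ord mulr_natl.
by apply: ler_sum => i _; rewrite !mxE -real_normK ?num_real // ler_sqr ?nnegrE ?Hxy.
Qed.

End Lipschitz.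

Section WeightBounds.
Context {R : realType}.
Implicit Types (q : \bar R) (c : R).

Lemma sqfrob_le_mx_lq {q c m n} (W : 'M[R]_(m, n)) :
  (1 <= q)%E -> (q <= 2%:E)%E -> 0 <= c -> mx_lq q m n W <= c -> sqfrob W <= c ^+ 2.
Proof.
move=> q1 q2 c0 Wc; apply: le_trans (sum_sqr_le_lq_norm_sqr _ _ q1 q2) _.
by rewrite ler_sqr ?nnegrE ?lq_norm_ge0.
Qed.

Lemma sqfrob_le_card_mx_lq {q c m n} (W : 'M[R]_(m, n)) :
  (2%:E <= q)%E -> 0 <= c -> mx_lq q m n W <= c ->
  sqfrob W <= (m * n)%:R `^ qexp q * c ^+ 2.
Proof.
move=> q2 c0 Wc; apply: le_trans (sum_sqr_le_card_lq_norm_sqr _ _ q2) _.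
rewrite card_prod !card_ord ler_wpM2l ?powR_ge0 //.
by rewrite ler_sqr ?nnegrE ?lq_norm_ge0.
Qed.

Lemma nn_sqlip_le {q c d Ns L} {Phi : nnet d Ns L} :
  (0 < L)%N -> (1 <= q)%E -> (q <= 2%:E)%E -> 0 <= c -> nn_norm_le d Ns L q c Phi ->
  nn_sqlip Phi <= (c ^+ L) ^+ 2.
Proof.
case: L Phi => [//|L] Phi _ q1 q2 c0 [HW [HWL _]].
apply: le_trans (_ : c ^+ 2 * \prod_(i < L) c ^+ 2 <= _); last first.
  by rewrite prodr_const card_ord -exprS -!exprM mulnC.
apply: ler_pM; rewrite ?sqfrob_ge0 ?prodr_ge0 //.
- by move=> i _; exact: sqfrob_ge0.
- exact: sqfrob_le_mx_lq q1 q2 c0 HWL.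
apply: ler_prod => i _; rewrite sqfrob_ge0 (sqfrob_le_mx_lq _ q1 q2 c0) //.
by case: (HW i (ltn_ord i)).
Qed.

Lemma prod_arch d Ns k :
  \prod_(i < k) ((arch d Ns i.+1 * arch d Ns i)%:R : R) * (arch d Ns k)%:R
  = d%:R * (\prod_(1 <= i < k.+1) (Ns i)%:R) ^+ 2.
Proof.
elim: k => [|k IH]; first by rewrite big_ord0 big_geq // mul1r expr1n mulr1.
rewrite big_ord_recr big_nat_recr //= natrM exprMn [RHS]mulrA -IH; ring.
Qed.

Lemma nn_sqlip_le_arch {q c d Ns L} {Phi : nnet d Ns L} :
  (0 < L)%N -> (2%:E <= q)%E -> 0 <= c -> nn_norm_le d Ns L q c Phi ->
  nn_sqlip Phi <= (c ^+ L * (Num.sqrt d%:R * \prod_(1 <= i < L) (Ns i)%:R) `^ qexp q) ^+ 2.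
Proof.
have P0 : 0 <= \prod_(1 <= i < L) (Ns i)%:R :> R by rewrite prodr_ge0.
have sqr_powR (x : R) : 0 <= x -> (x `^ qexp q) ^+ 2 = (x ^+ 2) `^ qexp q.
  by move=> x0; rewrite -!powR_mulrn ?powR_ge0 // -!powRrM mulrC.
rewrite exprMn sqr_powR ?mulr_ge0 ?sqrtr_ge0 // exprMn sqr_sqrtr ?ler0n //.
case: L Phi P0 => [//|L] Phi _ _ q2 c0 [HW [HWL _]].
set e := qexp q.
rewrite [leRHS](_ : _ = (1 * arch d Ns L)%:R `^ e * c ^+ 2 *
                        \prod_(i < L) ((arch d Ns i.+1 * arch d Ns i)%:R `^ e * c ^+ 2)).
  apply: ler_pM; rewrite ?sqfrob_ge0 ?prodr_ge0 //.
  - by move=> i _; exact: sqfrob_ge0.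
  - exact: sqfrob_le_card_mx_lq q2 c0 HWL.
  apply: ler_prod => i _; rewrite sqfrob_ge0 (sqfrob_le_card_mx_lq _ q2 c0) //.
  by case: (HW i (ltn_ord i)).
rewrite big_split /= prodr_const card_ord mul1n prodr_powR // -prod_arch.
rewrite powRM ?ler0n ?prodr_ge0 // -[in LHS]exprM mulnC exprM exprS; ring.
Qed.

End WeightBounds.

Section CubeLinf.
Context {R : realType}.

Lemma normr_mx_entry_le {m n} (M : 'M[R]_(m, n)) i j : `|M i j| <= `|M|.
Proof.
rewrite [X in _ <= X]mx_normrE.
exact: (le_bigmax 0 (fun ij : 'I_m * 'I_n => `|M ij.1 ij.2|) (i, j)).
Qed.

Lemma mx_normr_le {m n} (M : 'M[R]_(m, n)) r :
  0 <= r -> (forall i j, `|M i j| <= r) -> `|M| <= r.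
Proof.
by move=> r0 Mr; rewrite [X in X <= _]mx_normrE; apply/bigmax_leP; split => // ij _; exact: Mr.
Qed.

Lemma mx_normr_lt {m n} (M : 'M[R]_(m, n)) r :
  0 < r -> (forall i j, `|M i j| < r) -> `|M| < r.
Proof.
by move=> r0 Mr; rewrite [X in X < _]mx_normrE; apply/bigmax_ltP; split => // ij _; exact: Mr.
Qed.

Lemma cube_closed_ball d : cube d = closed_ball (const_mx 2^-1 : 'cV[R]_d) 2^-1.
Proof.
rewrite closed_ballE ?invr_gt0 //; apply/seteqP; split => x /= cx.
  apply: mx_normr_le; rewrite ?invr_ge0 // => i j; rewrite !mxE (ord1 j).
  by have /andP[] := cx i; rewrite ler_norml => ? ?; apply/andP; split; lra.
move=> i; have := le_trans (normr_mx_entry_le _ i ord0) cx.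
by rewrite !mxE ler_norml => /andP[? ?]; apply/andP; split; lra.
Qed.

Lemma borel_cubeI d (O : set 'cV[R]_d) : open O -> borel d (cube d `&` O).
Proof.
move=> oO; change ([set O : set 'cV[R]_d | open O].-sigma.-measurable (cube d `&` O)).
apply: measurableI; last exact: sub_sigma_algebra.
rewrite -[cube d]setCK; apply: measurableC; apply: sub_sigma_algebra.
by apply: closed_openC; rewrite cube_closed_ball; exact: closed_ball_closed.
Qed.

Lemma Linf_norm_le d (g : 'cV[R]_d -> R) (M : R) : (0 < d)%N ->
  (forall x, cube d x -> `|g x| <= M) -> (Linf_norm d g <= M%:E)%E.
Proof.
move=> d0 gM; apply: ereal_inf_lbound; exists M => // eps eps0.
exists (fun _ => 0), (fun _ => 0); split; first by move=> k i; rewrite mxE.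
split; first by move=> x [/gM]; rewrite leNgt => /negP.
move=> n; rewrite big1 ?ltW // => k _.
by under eq_bigr do rewrite !mxE subrr; rewrite prodr_const card_ord expr0n eqn0Ngt d0.
Qed.

End CubeLinf.

Section Approximant.
Context {R : realType} {d : nat}.
Implicit Types (s : seq ('cV[R]_d * R)) (x : 'cV[R]_d) (r b : R).

Definition local_max r b s x : R :=
  foldr (fun pv m => if `|pv.1 - x| < r then Num.max pv.2 m else m) b s.
Arguments local_max : simpl never.

Lemma local_max_cons r b pv s x : local_max r b (pv :: s) x =
  if `|pv.1 - x| < r then Num.max pv.2 (local_max r b s x) else local_max r b s x.
Proof. by []. Qed.

Lemma local_max_ge r b s x : b <= local_max r b s x.
Proof.
elim: s => [//|pv s IH]; rewrite local_max_cons.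
by case: ifP => // _; rewrite le_max IH orbT.
Qed.

Lemma local_max_ge_mem {r} b {s x pv} :
  pv \in s -> `|pv.1 - x| < r -> pv.2 <= local_max r b s x.
Proof.
elim: s => [//|pv' s IH]; rewrite in_cons local_max_cons => /orP[/eqP <- ->|pv_s px].
  by rewrite le_max lexx.
by case: ifP => _; rewrite ?le_max IH ?orbT.
Qed.

Lemma local_max_le r b s x M : b <= M ->
  (forall pv, pv \in s -> `|pv.1 - x| < r -> pv.2 <= M) -> local_max r b s x <= M.
Proof.
move=> bM; elim: s => [//|pv s IH] sM; rewrite local_max_cons.
have IH' : local_max r b s x <= M by apply: IH => pv' pv's; apply: sM; rewrite in_cons pv's orbT.
by case: ifP => // px; rewrite ge_max IH' sM ?mem_head.
Qed.

(* Each sample contributes an open ball, so superlevel sets are finite unions of open sets. *)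
Lemma open_local_max_gt r b s (a : R) : open [set x | a < local_max r b s x].
Proof.
elim: s => [|pv s IH].
  rewrite (_ : [set x | _] = if a < b then setT else set0).
    by case: ifP => _; [exact: openT | exact: open0].
  by apply/seteqP; split => x; rewrite /local_max /=; case: ifP.
have -> : [set x | a < local_max r b (pv :: s) x]
  = [set x | a < local_max r b s x] `|` (if a < pv.2 then [set x | `|pv.1 - x| < r] else set0).
  apply/seteqP; split => x /=; rewrite local_max_cons.
  - case: ifP => px; last by left.
    by rewrite lt_max => /orP[av|]; [right; rewrite av | left].
  - case=> [ax|]; first by case: ifP => // _; rewrite lt_max ax orbT.
    by case: ifP => // av px; rewrite px lt_max av.
apply: openU => //; case: ifP => _; last exact: open0.
have -> : [set x | `|pv.1 - x| < r] = ball pv.1 r by rewrite mx_norm_ball.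
exact: ball_open.
Qed.

Definition sample_bound s : R := \sum_(pv <- s) `|pv.2|.

Lemma sample_bound_ge0 s : 0 <= sample_bound s.
Proof. by apply: sumr_ge0 => ? _. Qed.

Lemma normr_le_sample_bound {s pv} : pv \in s -> `|pv.2| <= sample_bound s.
Proof.
by move=> pv_s; rewrite /sample_bound (big_rem pv) //= lerDl sample_bound_ge0.
Qed.

(* Default value [-B] keeps the approximant bounded by [B], the sum of all observed values. *)
Definition approximant r s : 'cV[R]_d -> R := local_max r (- sample_bound s) s.

Lemma normr_approximant_le r s x : `|approximant r s x| <= sample_bound s.
Proof.
have B0 := sample_bound_ge0 s.
rewrite ler_norml local_max_ge /=; apply: local_max_le => [|pv pv_s _]; first lra.
exact: le_trans (ler_norm _) (normr_le_sample_bound pv_s).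
Qed.

Lemma Linf_approximant r s : (0 < d)%N -> Linf d (approximant r s).
Proof.
move=> d0; split=> [a|]; first by apply: borel_cubeI; exact: open_local_max_gt.
apply: le_lt_trans (ltry (sample_bound s)).
by apply: Linf_norm_le => // x _; exact: normr_approximant_le.
Qed.

End Approximant.

Section Samples.
Context {R : realType} {d : nat} {f : seq ('cV[R]_d * R) -> 'cV[R]_d} {u : 'cV[R]_d -> R}.

Lemma size_samples k : size (samples d f u k) = k.
Proof. by elim: k => //= k IH; rewrite size_rcons IH. Qed.

Lemma nth_samples {m k} pv0 : (k < m)%N ->
  nth pv0 (samples d f u m) k = (f (samples d f u k), u (f (samples d f u k))).
Proof.
elim: m => [//|m IH] km /=; rewrite nth_rcons size_samples.
case: ltngtP => [/IH //|mk|-> //].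
by move: km; rewrite ltnS leqNgt mk.
Qed.

Lemma samples_snd {m pv} : pv \in samples d f u m -> pv.2 = u pv.1.
Proof.
elim: m => [//|m IH] /=; rewrite mem_rcons in_cons => /orP[/eqP -> //|]; exact: IH.
Qed.

End Samples.

Section Grid.
Context {R : realType}.

Definition grid_point {N d} (J : {ffun 'I_d -> 'I_N}) : 'cV[R]_d :=
  \col_i ((2 * (J i)%:R + 1) / (2 * N%:R)).

(* Query the grid points one after the other, ignoring the observed values; once
   the grid is exhausted, [nth] returns the default point [0]. *)
Definition grid_sampler N d (s : seq ('cV[R]_d * R)) : 'cV[R]_d :=
  nth 0 [seq grid_point J | J <- enum {ffun 'I_d -> 'I_N}] (size s).

Lemma grid_point_cube N d (J : {ffun 'I_d -> 'I_N}) : cube d (grid_point J).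
Proof.
move=> i; rewrite mxE.
have JN : (J i)%:R + 1 <= N%:R :> R by rewrite natr1 ler_nat ltn_ord.
have N0 : 0 < N%:R :> R by apply: lt_le_trans JN; rewrite ltr_wpDl.
by rewrite divr_ge0 ?addr_ge0 ?mulr_ge0 ?(ltW N0) //= ler_pdivrMr ?mulr_gt0 // mul1r; lra.
Qed.

Lemma grid_sampler_cube N d s : cube d (grid_sampler N d s).
Proof.
rewrite /grid_sampler; set G := [seq grid_point J | J <- _].
case: (ltnP (size s) (size G)) => sG; last by rewrite nth_default // => i; rewrite mxE lexx ler01.
by have /mapP[J _ ->] := mem_nth 0 sG; exact: grid_point_cube.
Qed.

Lemma grid_point_near N d (x : 'cV[R]_d) : (0 < N)%N -> cube d x ->
  exists J : {ffun 'I_d -> 'I_N}, forall i, `|grid_point J i ord0 - x i ord0| < N%:R^-1.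
Proof.
case: N => [//|N] _ cx.
have N0 : 0 < N.+1%:R :> R by rewrite ltr0n.
pose j i := minn (Num.truncn (N.+1%:R * x i ord0)) N.
exists [ffun i => inord (j i)] => i.
rewrite mxE ffunE inordK ?ltnS ?geq_minr //.
have /andP[x0 x1] := cx i.
have Nx0 : 0 <= N.+1%:R * x i ord0 by rewrite mulr_ge0 ?(ltW N0).
have Nx1 : N.+1%:R * x i ord0 <= N.+1%:R by rewrite ler_piMr ?(ltW N0).
have /andP[jx xj] : (j i)%:R <= N.+1%:R * x i ord0 <= (j i)%:R + 1.
  have /andP[t1 t2] := truncn_itv Nx0.
  rewrite /j; case: leqP => tN; first by rewrite t1 natr1 (ltW t2).
  by rewrite natr1 Nx1 andbT (le_trans _ t1) // ler_nat ltnW.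
have -> : (2 * (j i)%:R + 1) / (2 * N.+1%:R) - x i ord0
         = ((j i)%:R + 2^-1 - N.+1%:R * x i ord0) / N.+1%:R.
  by field; rewrite gt_eqF.
rewrite normrM [`|_^-1|]gtr0_norm ?invr_gt0 // -[X in _ < X]mul1r ltr_pM2r ?invr_gt0 //.
by rewrite ltr_norml; apply/andP; split; lra.
Qed.

Lemma exists_grid_size {d m} : (0 < d)%N -> (0 < m)%N ->
  exists N, [/\ (0 < N)%N, (N ^ d <= m)%N & (m < N.+1 ^ d)%N].
Proof.
move=> d0; case: m => [//|m] _; elim: m => [|m [N [N0 Nm mN]]].
  exists 1%N; split; rewrite ?exp1n //.
  by rewrite -[X in (X < _)%N](exp1n d) ltn_exp2r.
case: (ltnP m.+2 (N.+1 ^ d)) => mN'; first by exists N; split => //; exact: leqW.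
exists N.+1; have -> : (m.+2 = N.+1 ^ d)%N by apply/eqP; rewrite eqn_leq mN mN'.
by split => //; rewrite ltn_exp2r.
Qed.

Lemma inv_grid_size_le {N m d} : (0 < N)%N -> (0 < d)%N -> (0 < m)%N -> (m < N.+1 ^ d)%N ->
  N%:R^-1 <= 2 * m%:R `^ (- d%:R^-1) :> R.
Proof.
move=> N0 d0 m0 mN.
have N0' : 0 < N%:R :> R by rewrite ltr0n.
have root_le : m%:R `^ d%:R^-1 <= 2 * N%:R :> R.
  have -> : 2 * N%:R = ((2 * N%:R) ^+ d) `^ d%:R^-1 :> R.
    by rewrite -powR_mulrn ?mulr_ge0 // -powRrM mulfV ?pnatr_eq0 -?lt0n // powRr1 ?mulr_ge0.
  rewrite ge0_ler_powR ?nnegrE ?invr_ge0 ?exprn_ge0 ?mulr_ge0 //.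
  rewrite -natrM -natrX ler_nat (leq_trans (ltnW mN)) // leq_exp2r //; lia.
rewrite powRN -invf_div lef_pV2 ?posrE ?divr_gt0 ?powR_gt0 ?ltr0n //.
by rewrite ler_pdivrMr // mulrC.
Qed.

End Grid.

Section GridAlgorithm.
Context {R : realType}.

Lemma mem_samples_grid N d (u : 'cV[R]_d -> R) m (J : {ffun 'I_d -> 'I_N}) :
  (N ^ d <= m)%N -> (grid_point J, u (grid_point J)) \in samples d (grid_sampler N d) u m.
Proof.
move=> Nm; set k := index J (enum {ffun 'I_d -> 'I_N}).
have kN : (k < #|{ffun 'I_d -> 'I_N}|)%N by rewrite cardE index_mem mem_enum.
have km : (k < m)%N by rewrite (leq_trans kN) // card_ffun !card_ord.
have <- : grid_sampler N d (samples d (grid_sampler N d) u k) = grid_point J.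
  by rewrite /grid_sampler size_samples (nth_map J) -?cardE // nth_index ?mem_enum.
by rewrite -(nth_samples (0, 0) km) mem_nth ?size_samples.
Qed.

Lemma approximant_error_le d Ns L (Phi : nnet d Ns L) (K : R) N m x :
  (0 < N)%N -> (N ^ d <= m)%N -> 0 <= K -> nn_sqlip Phi <= K ^+ 2 -> cube d x ->
  `|realize d Ns L Phi x -
    approximant N%:R^-1 (samples d (grid_sampler N d) (realize d Ns L Phi) m) x|
  <= K * Num.sqrt d%:R * N%:R^-1.
Proof.
move=> N0 Nm K0 HK cx; set u := realize d Ns L Phi; set r : R := N%:R^-1.
set E := K * Num.sqrt d%:R * r; set s := samples d (grid_sampler N d) u m.
have lip p : `|p - x| < r -> `|u p - u x| <= E.
  move=> px; apply: normr_realize_sub_le => // [|i]; first by rewrite invr_ge0.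
  by have := normr_mx_entry_le (p - x) i ord0; rewrite !mxE => /le_lt_trans/(_ px)/ltW.
have [J Jx] := grid_point_near N d x N0 cx; set p : 'cV[R]_d := grid_point J.
have px : `|p - x| < r.
  apply: mx_normr_lt => [|i j]; rewrite ?invr_gt0 ?ltr0n // (ord1 j) !mxE.
  by have := Jx i; rewrite mxE.
have ps : (p, u p) \in s by exact: mem_samples_grid.
have := lip p px; rewrite ler_norml => /andP[upx uxp].
rewrite ler_norml; apply/andP; split; last first.
  by have := local_max_ge_mem (- sample_bound s) ps px; rewrite /approximant /=; lra.
suff : approximant r s x <= u x + E by lra.
apply: local_max_le => [|pv pv_s pvx].
  by have := normr_le_sample_bound ps; rewrite ler_norml /=; lra.
by rewrite (samples_snd pv_s); have := lip _ pvx; rewrite ler_norml; lra.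
Qed.

Lemma measurable_set_Prop {d0} {T : measurableType d0} (P : Prop) : measurable [set _ : T | P].
Proof.
have [p|np] := pselect P.
  by rewrite (_ : [set _ | P] = setT) //; apply/seteqP; split.
by rewrite (_ : [set _ | P] = set0) //; apply/seteqP; split.
Qed.

(* The deterministic grid algorithm, run on the one-point probability space. *)
Lemma errMC_le_grid {q c d Ns L m N} {K : R} :
  (0 < d)%N -> (0 < N)%N -> (N ^ d <= m)%N -> 0 <= K ->
  (forall Phi : nnet d Ns L, nn_norm_le d Ns L q c Phi -> nn_sqlip Phi <= K ^+ 2) ->
  (errMC d (Hclass q d Ns L c) m <= (K * Num.sqrt d%:R * N%:R^-1)%:E)%E.
Proof.
move=> d0 N0 Nm K0 HK.
pose A u := approximant N%:R^-1 (samples d (grid_sampler N d) u m) : 'cV[R]_d -> R.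
have intP (y : \bar R) : (\int[\d_(0%R : R)]_w y = y)%E.
  by rewrite integral_cst //= diracE in_setT mule1.
apply: ge_ereal_inf; exists (ereal_sup [set (\int[\d_(0%R : R)]_w Linf_norm d (u \- A u)%R)%E
                                         | u in Hclass q d Ns L c]).
  exists _, R, \d_(0%R : R), (fun _ => A), (fun _ => m); split => //; split; [|split; [|split]].
  - by move=> n; exact: measurable_set_Prop.
  - by rewrite intP.
  - by move=> u _ O _; exact: measurable_set_Prop.
  - move=> w; exists (grid_sampler N d), (approximant N%:R^-1); split; first exact: grid_sampler_cube.
    by split => // s; exact: Linf_approximant.
apply: ge_ereal_sup => _ [_ [Phi [HPhi ->]] <-]; rewrite intP.
by apply: Linf_norm_le => // x cx; apply: approximant_error_le => //; exact: HK.
Qed.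

Lemma errMC_Hclass_le {q c d Ns L m} {K : R} :
  (0 < d)%N -> (0 < m)%N -> 0 <= K ->
  (forall Phi : nnet d Ns L, nn_norm_le d Ns L q c Phi -> nn_sqlip Phi <= K ^+ 2) ->
  (errMC d (Hclass q d Ns L c) m <= (2 * Num.sqrt d%:R * K * m%:R `^ (- d%:R^-1))%:E)%E.
Proof.
move=> d0 m0 K0 HK; have [N [N0 Nm mN]] := exists_grid_size d0 m0.
apply: le_trans (errMC_le_grid d0 N0 Nm K0 HK) _; rewrite lee_fin.
rewrite [leRHS](_ : _ = K * Num.sqrt d%:R * (2 * m%:R `^ (- d%:R^-1))); last by ring.
by rewrite ler_wpM2l ?mulr_ge0 ?sqrtr_ge0 ?inv_grid_size_le.
Qed.

End GridAlgorithm.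

Theorem theorem2p7 (R : realType) (L d : nat) (q : \bar R) (c : R) (Ns : nat -> nat) :
  (0 < L)%N -> (0 < d)%N -> (1 <= q)%E -> 0 < c ->
  (forall i : nat, (0 < i < L)%N -> (0 < Ns i)%N) ->
  forall m : nat, (0 < m)%N ->
  ((q <= 2%:E)%E ->
     (errMC d (Hclass q d Ns L c) m <=
      (2 * Num.sqrt (d%:R) * c ^+ L * powR (m%:R) (- (d%:R)^-1))%:E)%E) /\
  ((2%:E <= q)%E ->
     (errMC d (Hclass q d Ns L c) m <=
      (2 * Num.sqrt (d%:R) * c ^+ L
         * powR (Num.sqrt (d%:R) * \prod_(1 <= i < L) (Ns i)%:R) (qexp q)
         * powR (m%:R) (- (d%:R)^-1))%:E)%E).
Proof.
move=> L0 d0 q1 c0 _ m m0; have cL0 : 0 <= c ^+ L := exprn_ge0 L (ltW c0).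
split=> q2.
  apply: (errMC_Hclass_le d0 m0 cL0) => Phi; exact: nn_sqlip_le L0 q1 q2 (ltW c0).
have K0 : 0 <= c ^+ L * (Num.sqrt d%:R * \prod_(1 <= i < L) (Ns i)%:R) `^ qexp q.
  by rewrite mulr_ge0 ?powR_ge0.
have := errMC_Hclass_le d0 m0 K0 (fun Phi => nn_sqlip_le_arch L0 q2 (ltW c0)).
by rewrite !mulrA.
Qed.
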